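(* Let $\mathcal{A}$ be an Ershov $\mathcal{C}$-algebra. Any system of equations $S(\bar{x})$ in variables $\bar{x}$ over $\mathcal{A}$ is equivalent over $\mathcal{A}$ to a system consisting of equations, each of one of the following forms: $$x_{i_1} \wedge \ldots \wedge x_{i_m} \wedge c \leq x_{j_1} \vee \ldots \vee x_{j_l},$$ $$x_{i_1} \wedge \ldots \wedge x_{i_m} \wedge c = 0 \quad (\text{when there are no variables on the right-hand side}),$$ $$x_{i_1} \wedge \ldots \wedge x_{i_m} \leq x_{j_1} \vee \ldots \vee x_{j_l} \vee c,$$ $$x_{i_1} \wedge \ldots \wedge x_{i_m} \leq x_{j_1} \vee \ldots \vee x_{j_l},$$ where $x_{i_1},\dots,x_{i_m},x_{j_1},\dots,x_{j_l}$ are variables from $\bar x$, the variable symbols on the two sides of each equation are all different, and $c \in \mathcal{C}$ with $c > 0$.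
   Context: An Ershov algebra is a structure $\langle A; \vee, \wedge, \setminus, 0\rangle$ such that $\langle A;\vee,\wedge\rangle$ is a distributive lattice with least element $0$, and $b \setminus a$ is the relative complement: the unique $z$ with $z \wedge a = 0$ and $z \vee a = a \vee b$. An Ershov $\mathcal{C}$-algebra is an Ershov algebra $\mathcal{A}$ together with a distinguished subalgebra $\mathcal{C}$ whose elements are added as constant symbols; $\mathcal{L}$ is the language $\{\vee,\wedge,\setminus,0\}$ plus these constants. An equation is $t(\bar x)=s(\bar x)$ with $t,s$ terms of $\mathcal{L}$; an inequality $t \le s$ is regarded as the equation $t \vee s = s$. A system of equations is any (possibly infinite) set of equations; two systems are equivalent over $\mathcal{A}$ if they have the same solution set in $A^n$. *)

(* An Ershov algebra is a (sectionally) relatively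
   complemented distributive lattice with bottom: mathcomp's
   [cbDistrLatticeType], with join `|`, meet `&`, bottom \bot = 0 and
   difference x `\` y (the complement of y relative to [\bot, x \/ y]). *)
From HB Require Import structures.
From mathcomp Require Import all_boot all_order.
Set Implicit Arguments. Unset Strict Implicit. Unset Printing Implicit Defensive.
Import Order.TTheory.
Local Open Scope order_scope.

Section ErshovTerms.
Variables (disp : Order.disp_t) (A : cbDistrLatticeType disp) (n : nat).

Inductive term : Type :=
  | Var of 'I_n
  | Const of A
  | Zero
  | Join of term & term
  | Meet of term & term
  | Diff of term & term.

Fixpoint eval (v : 'I_n -> A) (t : term) : A :=
  match t with
  | Var i => v i
  | Const c => c
  | Zero => \bot
  | Join t s => eval v t `|` eval v s
  | Meet t s => eval v t `&` eval v s
  | Diff t s => eval v t `\` eval v s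
  end.

Fixpoint consts_in (C : A -> Prop) (t : term) : Prop :=
  match t with
  | Var _ | Zero => True
  | Const c => C c
  | Join t s | Meet t s | Diff t s => consts_in C t /\ consts_in C s
  end.

Definition equation := (term * term)%type.

Definition eqn_in_L (C : A -> Prop) (e : equation) : Prop :=
  consts_in C e.1 /\ consts_in C e.2.

Definition ineq (t s : term) : equation := (Join t s, s).

Definition satisfies (v : 'I_n -> A) (e : equation) : Prop :=
  eval v e.1 = eval v e.2.

Definition system := equation -> Prop.

Definition solves (v : 'I_n -> A) (S : system) : Prop :=
  forall e, S e -> satisfies v e.

Definition equivalent_systems (S S' : system) : Prop :=
  forall v : 'I_n -> A, solves v S <-> solves v S'.

Definition meet_vars (base : term) (s : seq 'I_n) : term :=
  foldr (fun i t => Meet (Var i) t) base s.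
Definition join_vars (base : term) (s : seq 'I_n) : term :=
  foldr (fun j t => Join (Var j) t) base s.

(* The four admissible forms; I lists the left variables, J the right ones,
   and all variable symbols on both sides are distinct (uniq (I ++ J)).
   (1) x_I /\ c <= x_J          (J nonempty, m = |I| >= 0)
   (2) x_I /\ c = 0             (no variable on the right)
   (3) x_I <= x_J \/ c          (I nonempty)
   (4) x_I <= x_J               (I nonempty; empty join is 0)
   with c in C and c > 0. *)
Definition normal_eqn (C : A -> Prop) (e : equation) : Prop :=
  (exists (I J : seq 'I_n) (c : A), uniq (I ++ J) /\ C c /\ \bot < c /\
      J != [::] /\ e = ineq (meet_vars (Const c) I) (join_vars Zero J))
  \/ (exists (I : seq 'I_n) (c : A), uniq I /\ C c /\ \bot < c /\
      e = (meet_vars (Const c) I, Zero))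
  \/ (exists (i : 'I_n) (I J : seq 'I_n) (c : A), uniq ((i :: I) ++ J) /\ C c
      /\ \bot < c /\ e = ineq (meet_vars (Var i) I) (join_vars (Const c) J))
  \/ (exists (i : 'I_n) (I J : seq 'I_n), uniq ((i :: I) ++ J) /\
      e = ineq (meet_vars (Var i) I) (join_vars Zero J)).

End ErshovTerms.

Definition ershov_subalgebra (disp : Order.disp_t) (A : cbDistrLatticeType disp)
    (C : A -> Prop) : Prop :=
  C \bot /\ (forall a b, C a -> C b -> C (a `|` b)) /\
  (forall a b, C a -> C b -> C (a `&` b)) /\
  (forall a b, C a -> C b -> C (a `\` b)).

(* Read t = s as the sequents t |- s and s |- t, where G |- D means that every
   common lower bound of G lies below the join of D.  In an Ershov algebra each
   connective is eliminated by an invertible rule: on the left, t \/ s splits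
   the sequent in two, t /\ s becomes t, s, and t \ s becomes t with s moved to
   the right; on the right, t /\ s splits, t \/ s becomes t, s, and t \ s
   splits into |- t and s |- (since u <= (t \ s) \/ r iff u <= t \/ r and
   u /\ s <= r).  Each rule shrinks the terms, so S is equivalent to a set of
   atomic sequents x_I, c_1 .. c_k |- x_J, d_1 .. d_l.  Such a sequent is
   trivial if I and J meet; otherwise it says x_I <= x_J \/ d when k = 0 and
   x_I /\ (c \ d) <= x_J otherwise, with c = /\ c_i and d = \/ d_j in C.
   Dropping trivial cases (c \ d = 0) and duplicate variables leaves exactly
   the four normal forms. *)
From HB Require Import structures.
From mathcomp Require Import all_boot all_order zify.
From Stdlib Require List.
Set Implicit Arguments. Unset Strict Implicit. Unset Printing Implicit Defensive.
Import Order.Theory.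
Local Open Scope order_scope.

Section UpperBounds.
Variables (disp : Order.disp_t) (A : cbDistrLatticeType disp).
Implicit Types (a b t s r m : A).

Lemma le_foldr_meet a c cs :
  (a <= foldr Order.meet c cs) = all (fun x => a <= x) (c :: cs).
Proof. by elim: cs => [|x cs IH] /=; rewrite ?andbT // lexI IH /= andbCA. Qed.

Definition ubound (P : A -> Prop) r := forall a, P a -> a <= r.
Definition below (P : A -> Prop) t a := P a /\ a <= t.

Lemma ubound_principal (P : A -> Prop) m r :
  (forall a, P a <-> a <= m) -> ubound P r <-> m <= r.
Proof.
move=> Pm; split=> [Pr | mr a /Pm am]; first exact/Pr/Pm.
exact: le_trans am mr.
Qed.

Lemma ubound_ext (P Q : A -> Prop) r :
  (forall a, P a <-> Q a) -> ubound P r <-> ubound Q r.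
Proof. by move=> PQ; split=> H a /PQ; exact: H. Qed.

Lemma ubound_meetU (P : A -> Prop) t s r :
  ubound P ((t `&` s) `|` r) <-> ubound P (t `|` r) /\ ubound P (s `|` r).
Proof.
rewrite /ubound; split=> [H | [Ht Hs] a Pa].
  by split=> a /H; rewrite joinIl lexI => /andP[].
by rewrite joinIl lexI Ht ?Hs.
Qed.

Variable P : A -> Prop.
Hypothesis P_down : forall a b, b <= a -> P a -> P b.

Lemma ubound_below_join t s r :
  ubound (below P (t `|` s)) r <-> ubound (below P t) r /\ ubound (below P s) r.
Proof.
split=> [H | [Ht Hs] a [Pa le_a_ts]].
  by split=> a [Pa le_a]; apply: H; split=> //; [exact: lexUl | exact: lexUr].
have -> : a = (a `&` t) `|` (a `&` s) by rewrite -meetUr meet_l.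
by rewrite leUx Ht ?Hs //; split; rewrite ?leIr //; apply: P_down Pa; exact: leIl.
Qed.

Lemma ubound_below_diff t s r :
  ubound (below P (t `\` s)) r <-> ubound (below P t) (s `|` r).
Proof.
split=> [H a [Pa le_at] | H a [Pa]].
  rewrite -leBLR; apply: H; split; last exact: leBl.
  by apply: P_down Pa; exact: leBx.
rewrite leBRL => /andP[le_at disj_as].
by have := H a (conj Pa le_at); rewrite -leBLR disj_diffl.
Qed.

Lemma ubound_diffU t s r :
  ubound P ((t `\` s) `|` r) <-> ubound P (t `|` r) /\ ubound (below P s) r.
Proof.
split=> [H | [Ht Hs] a Pa].
  split=> [a Pa | a [Pa le_as]].
    by apply: le_trans (H a Pa) _; rewrite leUx leUr andbT lexUl ?leBx.
  have := H a Pa; rewrite -leBLR disj_diffl //.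
  by rewrite -lex0 -(diffKI t s) lexI leIr andbT (le_trans (leIl _ _) le_as).
rewrite -[a](joinIB s) leUx; apply/andP; split.
  by apply/lexUr/Hs; split; [apply: P_down Pa; exact: leIl | exact: leIr].
by rewrite leBLR joinA diffKU -joinA; apply/lexUr/Ht.
Qed.

End UpperBounds.

Section Sequents.
Variables (disp : Order.disp_t) (A : cbDistrLatticeType disp) (n : nat).
Implicit Types (v : 'I_n -> A) (a : A) (I J : seq 'I_n) (cs ds : seq A).
Implicit Types (t : term A n) (G D : seq (term A n)).

(* The sequent x_I, cs, G |- x_J, ds, D; with no top element available, its
   left-hand side is read through its common lower bounds. *)
Definition lower_bound v I cs G a :=
  [&& all (fun i => a <= v i) I, all (fun c => a <= c) cs
    & all (fun t => a <= eval v t) G].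
Definition rhs_join v J ds D :=
  \join_(j <- J) v j `|` \join_(d <- ds) d `|` \join_(t <- D) eval v t.
Definition sequent v I cs G J ds D :=
  ubound (lower_bound v I cs G) (rhs_join v J ds D).

Lemma lower_bound_term v I cs t G a :
  lower_bound v I cs (t :: G) a = (a <= eval v t) && lower_bound v I cs G a.
Proof. by rewrite /lower_bound /=; case: (a <= eval v t); rewrite ?andbF. Qed.

Lemma lower_bound_const v I cs c G a :
  lower_bound v I (c :: cs) G a = (a <= c) && lower_bound v I cs G a.
Proof. by rewrite /lower_bound /=; case: (a <= c); rewrite ?andbF. Qed.

Lemma lower_bound_var v I cs i G a :
  lower_bound v (i :: I) cs G a = (a <= v i) && lower_bound v I cs G a.
Proof. by rewrite /lower_bound /= -andbA. Qed.

Lemma lower_bound_down v I cs G a b :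
  b <= a -> lower_bound v I cs G a -> lower_bound v I cs G b.
Proof.
move=> le_ba /and3P[HI Hcs HG].
by apply/and3P; split; [move: HI | move: Hcs | move: HG]; apply: sub_all => x;
  exact: le_trans.
Qed.

Lemma rhs_join_term v J ds t D :
  rhs_join v J ds (t :: D) = eval v t `|` rhs_join v J ds D.
Proof. by rewrite /rhs_join big_cons /= joinCA. Qed.

Lemma rhs_join_var v J ds j D :
  rhs_join v (j :: J) ds D = v j `|` rhs_join v J ds D.
Proof. by rewrite /rhs_join big_cons /= !joinA. Qed.

Lemma rhs_join_const v J ds d D :
  rhs_join v J (d :: ds) D = d `|` rhs_join v J ds D.
Proof. by rewrite /rhs_join big_cons /= joinCA !joinA. Qed.

Lemma sequent_termL v I cs t G J ds D :
  sequent v I cs (t :: G) J ds D <->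
  ubound (below (lower_bound v I cs G) (eval v t)) (rhs_join v J ds D).
Proof.
by split=> H a; [case=> lb le_at | rewrite lower_bound_term => /andP[le_at lb]];
  apply: H; rewrite ?lower_bound_term ?lb ?le_at.
Qed.

Lemma sequent_varL v I cs i G J ds D :
  sequent v I cs (Var A i :: G) J ds D <-> sequent v (i :: I) cs G J ds D.
Proof. by apply: ubound_ext => a; rewrite lower_bound_term lower_bound_var. Qed.

Lemma sequent_constL v I cs c G J ds D :
  sequent v I cs (Const n c :: G) J ds D <-> sequent v I (c :: cs) G J ds D.
Proof. by apply: ubound_ext => a; rewrite lower_bound_term lower_bound_const. Qed.

Lemma sequent_zeroL v I cs G J ds D : sequent v I cs (Zero A n :: G) J ds D.
Proof. by move=> a; rewrite lower_bound_term lex0 => /andP[/eqP-> _]; exact: le0x. Qed.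

Lemma sequent_joinL v I cs t1 t2 G J ds D :
  sequent v I cs (Join t1 t2 :: G) J ds D <->
  sequent v I cs (t1 :: G) J ds D /\ sequent v I cs (t2 :: G) J ds D.
Proof. rewrite !sequent_termL; exact/ubound_below_join/lower_bound_down. Qed.

Lemma sequent_meetL v I cs t1 t2 G J ds D :
  sequent v I cs (Meet t1 t2 :: G) J ds D <-> sequent v I cs (t1 :: t2 :: G) J ds D.
Proof. by apply: ubound_ext => a; rewrite !lower_bound_term /= lexI andbA. Qed.

Lemma sequent_diffL v I cs t1 t2 G J ds D :
  sequent v I cs (Diff t1 t2 :: G) J ds D <-> sequent v I cs (t1 :: G) J ds (t2 :: D).
Proof.
by rewrite !sequent_termL rhs_join_term; exact/ubound_below_diff/lower_bound_down.
Qed.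

Lemma sequent_varR v I cs G J ds j D :
  sequent v I cs G J ds (Var A j :: D) <-> sequent v I cs G (j :: J) ds D.
Proof. by rewrite /sequent rhs_join_term rhs_join_var. Qed.

Lemma sequent_constR v I cs G J ds d D :
  sequent v I cs G J ds (Const n d :: D) <-> sequent v I cs G J (d :: ds) D.
Proof. by rewrite /sequent rhs_join_term rhs_join_const. Qed.

Lemma sequent_zeroR v I cs G J ds D :
  sequent v I cs G J ds (Zero A n :: D) <-> sequent v I cs G J ds D.
Proof. by rewrite /sequent rhs_join_term /= join0x. Qed.

Lemma sequent_joinR v I cs G J ds t1 t2 D :
  sequent v I cs G J ds (Join t1 t2 :: D) <-> sequent v I cs G J ds (t1 :: t2 :: D).
Proof. by rewrite /sequent !rhs_join_term /= joinA. Qed.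

Lemma sequent_meetR v I cs G J ds t1 t2 D :
  sequent v I cs G J ds (Meet t1 t2 :: D) <->
  sequent v I cs G J ds (t1 :: D) /\ sequent v I cs G J ds (t2 :: D).
Proof. rewrite /sequent !rhs_join_term; exact: ubound_meetU. Qed.

Lemma sequent_diffR v I cs G J ds t1 t2 D :
  sequent v I cs G J ds (Diff t1 t2 :: D) <->
  sequent v I cs G J ds (t1 :: D) /\ sequent v I cs (t2 :: G) J ds D.
Proof.
rewrite sequent_termL /sequent !rhs_join_term; exact/ubound_diffU/lower_bound_down.
Qed.

Lemma sequent_le v t s :
  sequent v [::] [::] [:: t] [::] [::] [:: s] <-> eval v t <= eval v s.
Proof.
rewrite sequent_termL /rhs_join big_cons !big_nil /= !join0x joinx0.
by apply: ubound_principal => a; split=> [[] | ].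
Qed.

Lemma sequent_atomE v I cs J ds m :
  (forall a, lower_bound v I cs [::] a <-> a <= m) ->
  sequent v I cs [::] J ds [::] <-> m <= \join_(j <- J) v j `|` \join_(d <- ds) d.
Proof. by rewrite /sequent /rhs_join big_nil joinx0; exact: ubound_principal. Qed.

Lemma sequent_atom_shared v I cs J ds :
  has (mem J) I -> sequent v I cs [::] J ds [::].
Proof.
case/hasP=> i iI iJ a /and3P[/allP/(_ i iI) le_ai _ _].
by do 2!apply: lexUl; exact: joins_min_seq iJ _ le_ai.
Qed.

Lemma satisfies_ineq v t s : satisfies v (ineq t s) <-> eval v t <= eval v s.
Proof. by rewrite /satisfies /= leEjoin; split=> [-> | /eqP]. Qed.

Lemma le_meet_vars v base I a :
  (a <= eval v (meet_vars base I)) = (a <= eval v base) && all (fun i => a <= v i) I.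
Proof. by elim: I => [|i I IH] /=; rewrite ?andbT // lexI IH andbCA. Qed.

Lemma eval_join_vars v base J :
  eval v (join_vars base J) = \join_(j <- J) v j `|` eval v base.
Proof. by elim: J => [|j J IH] /=; rewrite ?big_nil ?join0x // big_cons IH joinA. Qed.

Lemma meet_vars_le_base v base I : eval v (meet_vars base I) <= eval v base.
Proof. by elim: I => //= i I; exact: le_trans (leIr _ _). Qed.

Lemma meet_vars_diff v c d I :
  eval v (meet_vars (Const n (c `\` d)) I) = eval v (meet_vars (Const n c) I) `\` d.
Proof. by elim: I => //= i I ->; rewrite meetxB. Qed.
End Sequents.

Lemma undup_cat_uniq (T : eqType) (I J : seq T) :
  ~~ has (mem J) I -> uniq (undup I ++ undup J).
Proof.
move=> IJ; rewrite cat_uniq !undup_uniq andbT /=.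
apply: contra IJ => /hasP[j]; rewrite !mem_undup => jJ jI.
by apply/hasP; exists j.
Qed.

Section Normalization.
Variables (disp : Order.disp_t) (A : cbDistrLatticeType disp) (C : A -> Prop).
Hypotheses (C_bot : C \bot) (C_join : forall a b, C a -> C b -> C (a `|` b))
  (C_meet : forall a b, C a -> C b -> C (a `&` b))
  (C_diff : forall a b, C a -> C b -> C (a `\` b)).
Variable n : nat.
Implicit Types (v : 'I_n -> A) (P Q : ('I_n -> A) -> Prop).
Implicit Types (I J : seq 'I_n) (cs ds : seq A) (G D : seq (term A n)).

Definition normal_definable P := exists N : system A n,
  (forall e, N e -> normal_eqn C e) /\ forall v, P v <-> solves v N.

Lemma normal_definable_ext P Q :
  (forall v, P v <-> Q v) -> normal_definable Q -> normal_definable P.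
Proof. by move=> PQ [N [NC QN]]; exists N; split=> // v; rewrite PQ. Qed.

Lemma normal_definable_and P Q :
  normal_definable P -> normal_definable Q -> normal_definable (fun v => P v /\ Q v).
Proof.
move=> [N1 [N1C PN1]] [N2 [N2C QN2]]; exists (fun e => N1 e \/ N2 e); split.
  by move=> e [/N1C | /N2C].
move=> v; rewrite PN1 QN2; split=> [[sol1 sol2] e [/sol1 | /sol2] // | sol].
by split=> e Ne; apply: sol; [left | right].
Qed.

Lemma normal_definable_true P : (forall v, P v) -> normal_definable P.
Proof. by move=> Ptrue; exists (fun _ => False); split=> // v; split=> // _ e. Qed.

Lemma normal_definable_eqn e :
  normal_eqn C e -> normal_definable (fun v => satisfies v e).
Proof.
move=> eC; exists (eq^~ e); split=> [_ -> // | v].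
by split=> [sol _ -> // | sol]; exact: sol.
Qed.

Lemma C_joins ds : List.Forall C ds -> C (\join_(d <- ds) d).
Proof. by elim=> [|d {}ds Cd _ IH]; rewrite ?big_nil ?big_cons //; exact: C_join. Qed.

Lemma C_foldr_meet c cs : C c -> List.Forall C cs -> C (foldr Order.meet c cs).
Proof. by move=> Cc; elim=> [|d {}cs Cd _ IH] //=; exact: C_meet. Qed.

Lemma normal_definable_atom_vars I J ds : I != [::] -> ~~ has (mem J) I ->
  List.Forall C ds -> normal_definable (fun v => sequent v I [::] [::] J ds [::]).
Proof.
case eI: (undup I) => [|i I'] I0 IJ Cds; first by rewrite (undup_nil eI) in I0.
have := undup_cat_uniq IJ; rewrite eI => uniqIJ.
set d := \join_(x <- ds) x.
pose base := if d == \bot then Zero A n else Const n d.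
apply: (normal_definable_ext (Q := fun v => satisfies v
  (ineq (meet_vars (Var A i) I') (join_vars base (undup J))))).
  move=> v; rewrite satisfies_ineq eval_join_vars big_undup; last exact: joinxx.
  have -> : eval v base = d by rewrite /base; case: eqP.
  apply: sequent_atomE => a.
  by rewrite le_meet_vars /lower_bound /= !andbT -all_undup eI.
apply: normal_definable_eqn; rewrite /base; case: eqP => [_ | /eqP d0].
  by do 3!right; exists i, I', (undup J).
do 2!right; left; exists i, I', (undup J), d.
by rewrite lt0x d0; do !split=> //; exact: C_joins.
Qed.

Lemma normal_definable_atom_consts I c cs J ds :
  ~~ has (mem J) I -> C c -> List.Forall C cs -> List.Forall C ds ->
  normal_definable (fun v => sequent v I (c :: cs) [::] J ds [::]).
Proof.
move=> IJ Cc Ccs Cds.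
set c' := foldr Order.meet c cs `\` \join_(x <- ds) x.
have Cc' : C c' by apply: C_diff; [exact: C_foldr_meet | exact: C_joins].
have seqE v : sequent v I (c :: cs) [::] J ds [::] <->
    eval v (meet_vars (Const n c') (undup I)) <= \join_(j <- undup J) v j.
  rewrite big_undup; last exact: joinxx.
  rewrite meet_vars_diff leBLR joinC; apply: sequent_atomE => a.
  by rewrite le_meet_vars /lower_bound /= all_undup le_foldr_meet andbT andbC.
have [c'0 | c'0] := eqVneq c' \bot.
  apply: normal_definable_true => v; apply/seqE.
  by rewrite (le_trans (meet_vars_le_base _ _ _)) //= c'0 le0x.
have uniqIJ := undup_cat_uniq IJ.
case eJ: (undup J) => [|j J'] in seqE uniqIJ *.
  apply: (normal_definable_ext (Q := fun v =>
    satisfies v (meet_vars (Const n c') (undup I), Zero A n))).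
    by move=> v; rewrite seqE big_nil lex0; split=> [/eqP | /= ->].
  apply: normal_definable_eqn; right; left; exists (undup I), c'.
  by rewrite undup_uniq lt0x c'0.
apply: (normal_definable_ext (Q := fun v => satisfies v
  (ineq (meet_vars (Const n c') (undup I)) (join_vars (Zero A n) (j :: J'))))).
  by move=> v; rewrite seqE satisfies_ineq eval_join_vars /= joinx0.
apply: normal_definable_eqn; left; exists (undup I), (j :: J'), c'.
by rewrite uniqIJ lt0x c'0.
Qed.

Lemma normal_definable_atom I cs J ds :
  List.Forall C cs -> List.Forall C ds -> (I != [::]) || (cs != [::]) ->
  normal_definable (fun v => sequent v I cs [::] J ds [::]).
Proof.
move=> Ccs Cds nonempty.
have [IJ | IJ] := boolP (has (mem J) I).
  by apply: normal_definable_true => v; exact: sequent_atom_shared.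
case: cs Ccs nonempty => [_ | c cs /List.Forall_cons_iff[Cc Ccs]] nonempty.
  by apply: normal_definable_atom_vars; rewrite // orbF in nonempty.
exact: normal_definable_atom_consts.
Qed.

Fixpoint term_size (t : term A n) : nat :=
  match t with
  | Join t s | Meet t s | Diff t s => (term_size t + term_size s).+1
  | _ => 1
  end.

Definition sequent_size G D := (sumn (map term_size G) + sumn (map term_size D))%N.

(* With nothing on the left the sequent would bound all of A from above,
   which no normal equation expresses. *)
Definition normal_definable_upto m := forall I cs G J ds D, (sequent_size G D <= m)%N ->
  List.Forall C cs -> List.Forall C ds ->
  List.Forall (consts_in C) G -> List.Forall (consts_in C) D ->
  [|| I != [::], cs != [::] | ~~ nilp G] ->
  normal_definable (fun v => sequent v I cs G J ds D).

Lemma normal_definable_sequentL m : normal_definable_upto m -> forall I cs t G J ds D,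
  (sequent_size (t :: G) D <= m.+1)%N -> List.Forall C cs -> List.Forall C ds ->
  consts_in C t -> List.Forall (consts_in C) G -> List.Forall (consts_in C) D ->
  normal_definable (fun v => sequent v I cs (t :: G) J ds D).
Proof.
move=> IH I cs t G J ds D + Ccs Cds; rewrite /sequent_size /=.
case: t => [i | c | | t1 t2 | t1 t2 | t1 t2] /= hm Ct CG CD.
- apply: (normal_definable_ext (fun v => sequent_varL v I cs i G J ds D)).
  by apply: IH; rewrite /sequent_size //= ?orbT; lia.
- apply: (normal_definable_ext (fun v => sequent_constL v I cs c G J ds D)).
  by apply: IH; rewrite /sequent_size //= ?orbT; try lia; constructor.
- by apply: normal_definable_true => v; exact: sequent_zeroL.
- apply: (normal_definable_ext (fun v => sequent_joinL v I cs t1 t2 G J ds D)).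
  case: Ct => Ct1 Ct2.
  by apply: normal_definable_and; apply: IH; rewrite /sequent_size //= ?orbT;
    try lia; constructor.
- apply: (normal_definable_ext (fun v => sequent_meetL v I cs t1 t2 G J ds D)).
  case: Ct => Ct1 Ct2.
  by apply: IH; rewrite /sequent_size //= ?orbT; try lia; do !constructor.
- apply: (normal_definable_ext (fun v => sequent_diffL v I cs t1 t2 G J ds D)).
  case: Ct => Ct1 Ct2.
  by apply: IH; rewrite /sequent_size //= ?orbT; try lia; constructor.
Qed.

Lemma normal_definable_sequentR m : normal_definable_upto m -> forall I cs J ds t D,
  (sequent_size [::] (t :: D) <= m.+1)%N -> List.Forall C cs -> List.Forall C ds ->
  consts_in C t -> List.Forall (consts_in C) D -> (I != [::]) || (cs != [::]) ->
  normal_definable (fun v => sequent v I cs [::] J ds (t :: D)).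
Proof.
move=> IH I cs J ds t D + Ccs Cds; rewrite /sequent_size /=.
case: t => [j | d | | t1 t2 | t1 t2 | t1 t2] /= hm Ct CD nonempty.
- apply: (normal_definable_ext (fun v => sequent_varR v I cs [::] J ds j D)).
  by apply: IH; rewrite /sequent_size //= ?orbF; lia.
- apply: (normal_definable_ext (fun v => sequent_constR v I cs [::] J ds d D)).
  by apply: IH; rewrite /sequent_size //= ?orbF; try lia; constructor.
- apply: (normal_definable_ext (fun v => sequent_zeroR v I cs [::] J ds D)).
  by apply: IH; rewrite /sequent_size //= ?orbF; lia.
- apply: (normal_definable_ext (fun v => sequent_joinR v I cs [::] J ds t1 t2 D)).
  case: Ct => Ct1 Ct2.
  by apply: IH; rewrite /sequent_size //= ?orbF; try lia; do !constructor.
- apply: (normal_definable_ext (fun v => sequent_meetR v I cs [::] J ds t1 t2 D)).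
  case: Ct => Ct1 Ct2.
  by apply: normal_definable_and; apply: IH; rewrite /sequent_size //= ?orbF; try lia;
    constructor.
- apply: (normal_definable_ext (fun v => sequent_diffR v I cs [::] J ds t1 t2 D)).
  case: Ct => Ct1 Ct2.
  by apply: normal_definable_and; apply: IH; rewrite /sequent_size //= ?orbF ?orbT;
    try lia; constructor.
Qed.

Lemma term_size_gt0 t : (0 < term_size t)%N.
Proof. by case: t. Qed.

Lemma normal_definable_sequents m : normal_definable_upto m.
Proof.
elim: m => [|m IH] I cs [|t G] J ds [|u D] hm Ccs Cds CG CD nonempty;
  rewrite ?orbF in nonempty.
- exact: normal_definable_atom.
- by move: hm; rewrite /sequent_size /= addnC; have := term_size_gt0 u; lia.
- by move: hm; rewrite /sequent_size /=; have := term_size_gt0 t; lia.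
- by move: hm; rewrite /sequent_size /=; have := term_size_gt0 t; lia.
- exact: normal_definable_atom.
- by case/List.Forall_cons_iff: CD => Cu CD; exact: (normal_definable_sequentR IH).
- by case/List.Forall_cons_iff: CG => Ct CG; exact: (normal_definable_sequentL IH).
- by case/List.Forall_cons_iff: CG => Ct CG; exact: (normal_definable_sequentL IH).
Qed.

Lemma normal_definable_eq t s : consts_in C t -> consts_in C s ->
  normal_definable (fun v => satisfies v (t, s)).
Proof.
move=> Ct Cs.
have eq_sequents v : satisfies v (t, s) <->
    sequent v [::] [::] [:: t] [::] [::] [:: s] /\
    sequent v [::] [::] [:: s] [::] [::] [:: t].
  rewrite !sequent_le /satisfies /=; split=> [-> | [ts st]]; first by rewrite lexx.
  by apply: le_anti; rewrite ts st.
by apply: (normal_definable_ext eq_sequents); apply: normal_definable_and;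
  apply: normal_definable_sequents; do ?constructor.
Qed.
End Normalization.

(* Taking all normal equations implied by S avoids choosing a normal system
   for each equation of S. *)
Lemma normal_definable_solves (disp : Order.disp_t) (A : cbDistrLatticeType disp)
    (C : A -> Prop) n (S : system A n) :
  (forall e, S e -> normal_definable C (fun v => satisfies v e)) ->
  normal_definable C (fun v => solves v S).
Proof.
move=> Sdef; exists (fun e => normal_eqn C e /\ forall v, solves v S -> satisfies v e).
split=> [e [] // | v]; split=> [solS e [_ implied] | solN e Se]; first exact: implied.
have [N [NC defN]] := Sdef e Se.
apply/defN => e' Ne'; apply: solN; split=> [|w solSw]; first exact: NC.
exact: (proj1 (defN w)) (solSw e Se) e' Ne'.
Qed.

Theorem mainTheorem5 (disp : Order.disp_t) (A : cbDistrLatticeType disp)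
    (C : A -> Prop) (hC : ershov_subalgebra C) (n : nat)
    (S : system A n) (hS : forall e, S e -> eqn_in_L C e) :
  exists S' : system A n,
    (forall e, S' e -> normal_eqn C e) /\ equivalent_systems S S'.
Proof.
case: hC => C_bot [C_join [C_meet C_diff]].
have [S' [S'C defS']] : normal_definable C (fun v => solves v S).
  apply: normal_definable_solves => -[t s] /hS[Ct Cs].
  exact: normal_definable_eq.
by exists S'.
Qed.
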